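(* For every positive integer $k$, the windmill of $k$ wheels $W_4^{(k)}$ is difference distance magic orientable.
   Context: For $k\in\mathbb{Z}^+$, $W_4^{(k)}$ is the simple undirected graph on $1+4k$ vertices with vertex set $\{v\}\cup\{v_{ij}:1\le i\le k,\ 1\le j\le 4\}$ and edge set $\bigcup_{i=1}^k\big(\{v_{i1}v_{i2},v_{i1}v_{i3},v_{i3}v_{i4},v_{i2}v_{i4}\}\cup\{vv_{i1},vv_{i2},vv_{i3},vv_{i4}\}\big)$. An orientation of a graph assigns a direction to each edge, giving an oriented graph. In an oriented graph, $N^+(x)=\{y:(y,x)\text{ is an arc}\}$, $N^-(x)=\{y:(x,y)\text{ is an arc}\}$, and for a labeling $f$, $wt_f(x)=\sum_{y\in N^+(x)}f(y)-\sum_{y\in N^-(x)}f(y)$. A DDM labeling of an oriented graph on $n$ vertices is a bijection $f:V\to\{1,\dots,n\}$ with $wt_f(x)=0$ for all $x$. A graph is difference distance magic orientable (DDMO) if it has an orientation admitting a DDM labeling. *)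

From mathcomp Require Import all_boot all_order all_algebra.
Set Implicit Arguments. Unset Strict Implicit. Unset Printing Implicit Defensive.
Import Order.TTheory GRing.Theory Num.Theory.

Definition is_orientation (V : finType) (adj : rel V) (arc : rel V) : Prop :=
  (forall x y, arc x y -> adj x y) /\
  (forall x y, adj x y -> arc x y (+) arc y x).

(* wt_f(x) = sum_{y in N^+(x)} f y - sum_{y in N^-(x)} f y,
   N^+(x) = {y : (y,x) arc}, N^-(x) = {y : (x,y) arc}. *)
Definition wt (V : finType) (arc : rel V) (f : V -> nat) (x : V) : int :=
  (\sum_(y | arc y x) (f y)%:Z - \sum_(y | arc x y) (f y)%:Z)%R.

Definition is_DDM_labeling (V : finType) (arc : rel V) (f : V -> nat) : Prop :=
  injective f /\ (forall x, 1 <= f x <= #|V|)%N /\ (forall x, wt arc f x = 0%R).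

Definition DDMO (V : finType) (adj : rel V) : Prop :=
  exists arc : rel V, is_orientation adj arc /\
    exists f : V -> nat, is_DDM_labeling arc f.

(* The windmill W_4^(k): vertex None is the center v; Some (i, j) is
   v_{i,j+1} (i : 'I_k, j : 'I_4, 0-based). *)
Definition W4_vertex (k : nat) : finType := option ('I_k * 'I_4)%type.

(* Cycle edges within block i: v_{i1}v_{i2}, v_{i1}v_{i3}, v_{i3}v_{i4},
   v_{i2}v_{i4}, i.e. 0-based pairs {0,1},{0,2},{2,3},{1,3}. *)
Definition C4_adj (a b : nat) : bool :=
  [|| (a == 0) && (b == 1), (a == 0) && (b == 2),
      (a == 2) && (b == 3) | (a == 1) && (b == 3)]%N.

Definition W4_adj (k : nat) : rel (W4_vertex k) :=
  fun x y =>
    match x, y with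
    | None, None => false
    | None, Some _ => true
    | Some _, None => true
    | Some (i, a), Some (i', b) =>
        (i == i') && (C4_adj a b || C4_adj b a)
    end.

From mathcomp Require Import all_boot all_order all_algebra.
From mathcomp Require Import zify.
Import GRing.Theory.

(* Split each 4-cycle along its bipartition {v_i1, v_i4}, {v_i2, v_i3} and
   orient hub -> first class -> second class -> hub.  A blade vertex then has
   weight +-(hub label - sum of the opposite class), and the hub has weight the
   sum over the blocks of the difference of the two class sums.  So all weights
   vanish once both classes of every block sum to the hub label 4k+1, as they do
   for the labels 2i+1, 2i+2, 4k+1-(2i+2), 4k+1-(2i+1) of block i (from 0),
   which run through 1, ..., 4k exactly once. *)

Lemma big_option {R : Type} {idx : R} {op : Monoid.com_law idx} (T : finType)
    (P : pred (option T)) (F : option T -> R) :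
  \big[op/idx]_(x | P x) F x =
    op (if P None then F None else idx) (\big[op/idx]_(y | P (Some y)) F (Some y)).
Proof.
rewrite big_mkcond (bigD1 None) //= [in RHS]big_mkcond; congr (op _ _).
rewrite (@reindex_omap _ _ _ _ _ Some id) //; last by case.
by apply: eq_bigl => y; rewrite eqxx.
Qed.

Lemma big_pair_fst {R : Type} {idx : R} {op : Monoid.com_law idx} {I J : finType}
    (i0 : I) (Q : pred J) (F : I * J -> R) :
  \big[op/idx]_(p | (p.1 == i0) && Q p.2) F p = \big[op/idx]_(j | Q j) F (i0, j).
Proof.
rewrite -(big_pred1_eq op i0 (fun i => \big[op/idx]_(j | Q j) F (i, j))).
by rewrite pair_big_dep; apply: eq_bigr => -[].
Qed.

Section Windmill.

Variable k : nat.

Local Notation vertex := (W4_vertex k).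

Definition source_side (j : 'I_4) : bool := (val j == 0) || (val j == 3).

Definition w4_arc : rel vertex := fun x y =>
  match x, y with
  | None, None => false
  | None, Some (_, b) => source_side b
  | Some (_, a), None => ~~ source_side a
  | Some (i, a), Some (i', b) => [&& i == i', source_side a & ~~ source_side b]
  end.

Lemma w4_arc_orientation : is_orientation (@W4_adj k) w4_arc.
Proof.
rewrite /source_side /C4_adj; split=> -[[i a]|] [[i' b]|] //=.
- case/and3P=> -> /=.
  by case: a b => [[|[|[|[|?]]]] ?] [[|[|[|[|?]]]] ?].
- rewrite (eq_sym i'); case: (i == i') => //=.
  by case: a b => [[|[|[|[|?]]]] ?] [[|[|[|[|?]]]] ?].
- by case: a => [[|[|[|[|?]]]] ?].
- by case: b => [[|[|[|[|?]]]] ?].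
Qed.

Definition block_sum (f : vertex -> nat) (i : 'I_k) (P : pred 'I_4) : nat :=
  \sum_(j | P j) f (Some (i, j)).

Lemma wt_w4_hub (f : vertex -> nat) :
  wt w4_arc f None =
    (\sum_i ((block_sum f i (predC source_side))%:Z
             - (block_sum f i source_side)%:Z))%R.
Proof.
rewrite /wt !big_option /= !add0r sumrB.
congr (_ - _)%R; under [RHS]eq_bigr do rewrite raddf_sum;
  by rewrite pair_big; apply: eq_big => -[].
Qed.

Lemma wt_w4_blade (f : vertex -> nat) (i : 'I_k) (j : 'I_4) :
  wt w4_arc f (Some (i, j)) =
    if source_side j then ((f None)%:Z - (block_sum f i (predC source_side))%:Z)%R
    else ((block_sum f i source_side)%:Z - (f None)%:Z)%R.
Proof.
rewrite /wt !big_option /= /block_sum ![Posz (\sum_(_ | _) _)]raddf_sum.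
case: (source_side j) => /=.
- rewrite big_pred0; last by move=> -[? ?]; rewrite /= !andbF.
  rewrite add0r addr0 -(big_pair_fst i (predC source_side) (fun p => Posz (f (Some p)))).
  by congr (_ - _)%R; apply: eq_bigl => -[i' b]; rewrite eq_sym.
- rewrite [X in (_ - (_ + X))%R]big_pred0; last by move=> -[? ?]; rewrite /= !andbF.
  rewrite add0r addr0 -(big_pair_fst i source_side (fun p => Posz (f (Some p)))).
  by congr (_ - _)%R; apply: eq_bigl => -[i' b]; rewrite andbT.
Qed.

Definition balanced (f : vertex -> nat) : Prop :=
  forall i, block_sum f i source_side = f None /\
            block_sum f i (predC source_side) = f None.

Lemma wt_balanced_eq0 (f : vertex -> nat) :
  balanced f -> forall x, wt w4_arc f x = 0%R.
Proof.
move=> bal_f [[i j]|].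
- by rewrite wt_w4_blade; have [-> ->] := bal_f i; case: ifP; rewrite subrr.
- by rewrite wt_w4_hub big1 // => i _; have [-> ->] := bal_f i; rewrite subrr.
Qed.

Definition w4_label (x : vertex) : nat :=
  match x with
  | None => 4 * k + 1
  | Some (i, j) =>
      match val j with
      | 0 => 2 * i + 1
      | 1 => 2 * i + 2
      | 2 => 4 * k + 1 - (2 * i + 2)
      | _ => 4 * k + 1 - (2 * i + 1)
      end
  end.

Lemma w4_label_balanced : balanced w4_label.
Proof.
move=> i; have := ltn_ord i.
by rewrite /block_sum; split; rewrite big_mkcond !big_ord_recr big_ord0 /=; lia.
Qed.

Lemma card_W4_vertex : #|vertex| = 4 * k + 1.
Proof. by rewrite card_option card_prod !card_ord mulnC addn1. Qed.

Lemma w4_label_inj : injective w4_label.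
Proof.
move=> [[i a]|] [[i' b]|] /=; last by [].
- move=> E; have [Ei Ea] : val i = val i' /\ val a = val b.
    have := ltn_ord i; have := ltn_ord i'.
    by case: a b E => [[|[|[|[|?]]]] ?] [[|[|[|[|?]]]] ?] //=; lia.
  by rewrite (val_inj Ei) (val_inj Ea).
- have := ltn_ord i; case: a => [[|[|[|[|?]]]] ?] //= *; lia.
- have := ltn_ord i'; case: b => [[|[|[|[|?]]]] ?] //= *; lia.
Qed.

Lemma w4_label_range (x : vertex) : 1 <= w4_label x <= #|vertex|.
Proof.
rewrite card_W4_vertex; case: x => [[i [[|[|[|[|?]]]] ?]]|] //=; last lia.
all: have := ltn_ord i; lia.
Qed.

Lemma w4_label_DDM : is_DDM_labeling w4_arc w4_label.
Proof.
split; first exact: w4_label_inj.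
by split; [exact: w4_label_range | exact: wt_balanced_eq0 w4_label_balanced].
Qed.

End Windmill.

Theorem theorem4 (k : nat) : (0 < k)%N -> DDMO (@W4_adj k).
Proof.
(* The construction also covers the single vertex W_4^(0). *)
move=> _.
exists (@w4_arc k); split; first exact: w4_arc_orientation.
by exists (@w4_label k); exact: w4_label_DDM.
Qed.
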